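(* For all integers $t\ge k$ and all $i$ with $0\le i\le\rho(m)-1$, \[ \mu_i\;\le\;\sum_{j=1}^{k} x^{\alpha_i}(t-j)\;\le\;1+\mu_i . \]
   Context: For $u\in\mathbb{R}$ let $\mathbf 1[u]=1$ if $u\ge 0$ and $\mathbf 1[u]=0$ if $u<0$. Let $m$ be a positive integer and let $\rho(m)$ denote the number of primes $p$ with $2m<p<3m$; assume $\rho(m)\ge 2$. List these primes as $p_0>p_1>\dots>p_{\rho(m)-1}$ and put $\alpha_i=3m-p_i$. Let $k=(6m-1)\rho(m)$, $\mu_i=\lfloor k/p_i\rfloor$, $\beta_i=k-p_i\mu_i$. Define weights $\bar a_j$, $1\le j\le k$: if $\rho(m)$ is even, $\bar a_j=2$ if $j=\ell p_i$ for some $i$ and some $\ell$ with $1\le \ell\le 3\rho(m)/2$, $\bar a_j=-2$ if $j=\ell p_i$ with $3\rho(m)/2<\ell\le 2\rho(m)$, and $\bar a_j=0$ otherwise; if $\rho(m)$ is odd, $\bar a_j=2$ if $j=\ell p_i$ with $1\le\ell\le (3\rho(m)-1)/2$, $\bar a_j=-2$ if $j=\ell p_i$ with $(3\rho(m)+1)/2\le \ell\le 2\rho(m)-2$, $\bar a_j=-1$ if $j=\ell p_i$ with $\ell\in\{2\rho(m)-1,2\rho(m)\}$, and $\bar a_j=0$ otherwise (well defined since the sets $\{\ell p_i:1\le\ell\le2\rho(m)\}$ are pairwise disjoint). Let $\bar\theta=2\rho(m)$. For each $i$ define $x^{\alpha_i}(t)$ for $0\le t\le k-1$ by $x^{\alpha_i}(t)=1$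 if $t=\beta_i+\ell p_i$ for some $0\le \ell\le\mu_i-1$ and $x^{\alpha_i}(t)=0$ otherwise, and for $t\ge k$ by $x^{\alpha_i}(t)=\mathbf 1\big[\sum_{j=1}^k \bar a_j x^{\alpha_i}(t-j)-\bar\theta\big]$. *)

From HB Require Import structures.
From mathcomp Require Import all_boot all_order all_algebra.
Set Implicit Arguments. Unset Strict Implicit. Unset Printing Implicit Defensive.
Import Order.TTheory GRing.Theory Num.Theory.

(* primes p with 2m < p < 3m, listed in decreasing order p_0 > p_1 > ... *)
Definition primes_between (m : nat) : seq nat :=
  [seq p <- rev (iota 0 (3 * m)) | prime p && (2 * m < p)].

Definition rho (m : nat) : nat := size (primes_between m).

Definition pr (m i : nat) : nat := nth 0 (primes_between m) i.

Definition alpha (m i : nat) : nat := 3 * m - pr m i.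

Definition kk (m : nat) : nat := (6 * m - 1) * rho m.
Definition mu (m i : nat) : nat := kk m %/ pr m i.
Definition beta (m i : nat) : nat := kk m %% pr m i.

(* weight attached to j = l * p_i, 1 <= l <= 2 rho *)
Definition wt (r l : nat) : int :=
  if ~~ odd r then
    (if l <= (3 * r) %/ 2 then Posz 2 else (-2)%R)
  else
    (if l <= (3 * r - 1) %/ 2 then Posz 2
     else if l <= 2 * r - 2 then (-2)%R else (-1)%R).

(* \bar a_j : weight wt(l) if j = l * p_i for some i < rho and 1 <= l <= 2 rho,
   0 otherwise (the index i is unique: the sets {l p_i} are disjoint) *)
Definition abar (m j : nat) : int :=
  let r := rho m in
  match [seq i <- iota 0 r | (pr m i %| j) && (0 < j %/ pr m i <= 2 * r)] with
  | i :: _ => wt r (j %/ pr m i)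
  | [::] => 0%R
  end.

Definition theta (m : nat) : int := Posz (2 * rho m).

Definition x_init (m i t : nat) : bool :=
  has (fun l => t == beta m i + l * pr m i) (iota 0 (mu m i)).

(* next value given the history h = [x(0); ...; x(n-1)] *)
Definition x_next (m i n : nat) (h : seq bool) : bool :=
  if n < kk m then x_init m i n
  else (theta m <= \sum_(1 <= j < (kk m).+1) abar m j * Posz (nth false h (n - j) : nat))%R.

Fixpoint x_hist (m i n : nat) : seq bool :=
  match n with
  | 0 => [::]
  | n'.+1 => let h := x_hist m i n' in rcons h (x_next m i n' h)
  end.

(* x^{alpha_i}(t) as a 0/1 value *)
Definition x (m i t : nat) : nat := nth false (x_hist m i t.+1) t.

(* Write p = p_i and b = beta_i, so that k = mu_i p + b with b < p.  The heart
   of the proof is that x^{alpha_i} is the periodic pattern [s = b mod p] at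
   every time s (x_periodic).  For s < k this is the initial condition.  For
   s >= k, assuming the pattern in the past, the weighted sum of the
   threshold unit splits along the disjoint blocks {l p_a : 1 <= l <= 2 rho}:
   the own block a = i sees the constant value [s = b mod p] and so
   contributes [s = b mod p] * theta, because the weights sum to theta = 2 rho;
   a foreign block a <> i contains at most one active position (the numbers
   s - l p_a, l < p, are pairwise incongruent mod p) and so contributes at
   most 2, and nothing at all when s = b mod p.  Hence the threshold is met
   exactly when s = b mod p.  The statement then follows from counting the
   integers = b mod p in a window of mu_i p + b consecutive integers. *)

From mathcomp Require Import all_boot all_order all_algebra.
From mathcomp Require Import zify.
Import Order.TTheory GRing.Theory Num.Theory.

Set Implicit Arguments.
Unset Strict Implicit.

Lemma sum_indicator_le1 (a n : nat) (P : nat -> bool) :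
  (forall l1 l2, a <= l1 < n -> a <= l2 < n -> P l1 -> P l2 -> l1 = l2) ->
  \sum_(a <= l < n) (P l : nat) <= 1.
Proof.
elim: n => [|n IH] P_inj; first by rewrite big_geq.
have [an|na] := leqP a n; last by rewrite big_geq.
rewrite big_nat_recr //=; case Pn: (P n).
  rewrite big1_seq //= => l; rewrite mem_index_iota => hl.
  by case Pl: (P l) => //; have := P_inj l n; rewrite Pl Pn; lia.
by rewrite addn0 IH // => l1 l2 h1 h2; apply: P_inj; lia.
Qed.

Lemma sum_window_rev (F : nat -> nat) (k t : nat) : k <= t ->
  \sum_(1 <= j < k.+1) F (t - j) = \sum_(t - k <= s < t) F s.
Proof.
elim: k => [|k IH] hk; first by rewrite !big_geq // subn0.
rewrite big_nat_recr //= IH ?(ltnW hk) // [RHS](@big_ltn _ _ _ (t - k.+1)); last lia.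
by rewrite addnC; congr (_ + _); congr (\sum_(_ <= _ < _) _); lia.
Qed.

Section ResidueCount.
Variables (p b : nat).
Hypotheses (p_gt0 : 0 < p) (b_lt_p : b < p).

Let hit (s : nat) : nat := s %% p == b.

Lemma count_residue_period (a : nat) : \sum_(a <= s < a + p) hit s = 1.
Proof.
elim: a => [|a IH].
  rewrite add0n (eq_big_nat _ _ (F2 := fun s => if s == b then 1 else 0)).
    by rewrite -big_mkcond big_nat1_eq b_lt_p.
  by move=> s /andP[_ sp]; rewrite /hit modn_small //; case: (s == b).
have shift : \sum_(a <= s < a + p) hit s + hit (a + p)
           = hit a + \sum_(a.+1 <= s < a.+1 + p) hit s.
  by rewrite -big_nat_recr ?(big_ltn (m := a)) ?addSn //; lia.
by move: shift; rewrite IH /hit modnDr; lia.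
Qed.

Lemma count_residue_periods (a q : nat) : \sum_(a <= s < a + q * p) hit s = q.
Proof.
elim: q => [|q IH]; first by rewrite big_geq // mul0n addn0.
rewrite (big_cat_nat _ (n := a + q * p)) ?IH /=; try lia.
by rewrite mulSn (addnC p) addnA count_residue_period; lia.
Qed.

Lemma count_residue_window (a q r : nat) : r < p ->
  q <= \sum_(a <= s < a + (q * p + r)) hit s <= q.+1.
Proof.
move=> r_lt_p.
rewrite (big_cat_nat _ (n := a + q * p)) ?count_residue_periods /=; try lia.
rewrite leq_addr /= -addn1 leq_add2l -(count_residue_period (a + q * p)) addnA.
by rewrite [X in _ <= X](big_cat_nat (n := a + q * p + r)) /=; lia.
Qed.

End ResidueCount.

Lemma eq_mod_subn (t J p : nat) : J <= t -> ((t - J) %% p == t %% p) = (p %| J).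
Proof. by move=> hJ; rewrite eq_sym eqn_mod_dvd ?leq_subr // subKn. Qed.

Lemma sub_multiples_mod_inj (t p q l1 l2 : nat) : coprime p q ->
  l1 < p -> l2 < p -> l1 * q <= t -> l2 * q <= t ->
  (t - l1 * q) %% p = (t - l2 * q) %% p -> l1 = l2.
Proof.
move=> co_pq.
wlog l12 : l1 l2 / l1 <= l2 => [hwlog|].
  by have [/hwlog//|/ltnW/hwlog h *] := leqP l1 l2; apply/esym/h.
move=> _ l2p _ l2t eq_mod.
have le_sub : t - l2 * q <= t - l1 * q by rewrite leq_sub2l // leq_mul2r l12 orbT.
have := eqn_mod_dvd p le_sub; rewrite eq_mod eqxx.
have -> : t - l1 * q - (t - l2 * q) = (l2 - l1) * q.
  by rewrite mulnBl; move: l2t (leq_mul l12 (leqnn q)); lia.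
rewrite Gauss_dvdl // => /esym p_dvd.
by case: (posnP (l2 - l1)) => [|pos]; [lia | move: (dvdn_leq pos p_dvd); lia].
Qed.

Lemma weighted_indicator_sum_le (w : nat -> int) (w0 : int) (P : nat -> bool) (a n : nat) :
  (0 <= w0)%R -> (forall l, w l <= w0)%R -> \sum_(a <= l < n) (P l : nat) <= 1 ->
  (\sum_(a <= l < n) w l * Posz (P l) <= w0)%R.
Proof.
move=> w0_ge0 w_le one_active.
apply: (@le_trans _ _ (\sum_(a <= l < n) w0 * Posz (P l))%R).
  by apply: ler_sum => l _; apply: ler_wpM2r.
rewrite -mulr_sumr -[X in (_ <= X)%R]mulr1 ler_wpM2l //.
have -> : (\sum_(a <= l < n) Posz (P l) = Posz (\sum_(a <= l < n) (P l : nat)))%R.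
  by rewrite -natz natr_sum; apply: eq_bigr => l _; rewrite natz.
by rewrite lez_nat.
Qed.

Lemma mem_primes_between (m p : nat) :
  (p \in primes_between m) = [&& prime p, 2 * m < p & p < 3 * m].
Proof.
by rewrite mem_filter mem_rev mem_iota /=; case: (prime p); case: (2 * m < p).
Qed.

Lemma uniq_primes_between (m : nat) : uniq (primes_between m).
Proof. by rewrite filter_uniq // rev_uniq iota_uniq. Qed.

Lemma pr_spec (m a : nat) : a < rho m ->
  [/\ prime (pr m a), 2 * m < pr m a & pr m a < 3 * m].
Proof. by move=> ha; apply/and3P; rewrite -mem_primes_between mem_nth. Qed.

Lemma pr_inj (m a b : nat) : a < rho m -> b < rho m -> pr m a = pr m b -> a = b.
Proof.
by move=> ha hb /eqP; rewrite nth_uniq ?uniq_primes_between // => /eqP.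
Qed.

(* The p_a are distinct integers of (2m, 3m), so there are fewer than m. *)
Lemma rho_le_pred (m : nat) : rho m <= m - 1.
Proof.
rewrite /rho -(size_iota (2 * m).+1 (m - 1)) uniq_leq_size ?uniq_primes_between //.
by move=> p; rewrite mem_primes_between mem_iota => /and3P[_ h1 h2]; lia.
Qed.

Lemma two_rho_lt_pr (m a : nat) : a < rho m -> 2 * rho m < pr m a.
Proof. by move=> /pr_spec[_ h _]; have := rho_le_pred m; lia. Qed.

Lemma coprime_pr (m a b : nat) : a < rho m -> b < rho m -> a != b ->
  coprime (pr m a) (pr m b).
Proof.
move=> ha hb neq_ab; have [pa _ _] := pr_spec ha; have [pb _ _] := pr_spec hb.
rewrite prime_coprime // dvdn_prime2 //.
by apply: contra neq_ab => /eqP /(pr_inj ha hb) ->.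
Qed.

Lemma block_index_le_kk (m a l : nat) : a < rho m -> l <= 2 * rho m ->
  l * pr m a <= kk m.
Proof.
move=> ha hl; have [_ _ p_lt] := pr_spec ha.
apply: (@leq_trans (2 * rho m * (3 * m - 1))); first by apply: leq_mul; lia.
by rewrite /kk; nia.
Qed.

Lemma wt_le2 (r l : nat) : (wt r l <= 2)%R.
Proof. by rewrite /wt; repeat case: ifP. Qed.

(* The weights of a block sum to theta = 2 r: for r = 2q they are 3q twos
   and q minus-twos; for r = 2q + 1, 3q + 1 twos, q minus-twos and two
   minus-ones. *)
Lemma sum_wt (r : nat) : 2 <= r ->
  (\sum_(1 <= l < (2 * r).+1) wt r l = Posz (2 * r))%R.
Proof.
move=> r_ge2; rewrite /wt; have [q r_eq] : exists q, r = 2 * q + odd r.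
  by exists r./2; have := odd_double_half r; rewrite -muln2; lia.
case: (boolP (odd r)) => r_odd /=.
- rewrite r_odd in r_eq; rewrite (_ : (3 * r - 1) %/ 2 = 3 * q + 1); last by lia.
  rewrite (big_cat_nat (n := 3 * q + 2)) /=; try lia.
  rewrite [X in (_ + X)%R](big_cat_nat (n := 4 * q + 1)) /=; try lia.
  rewrite (eq_big_nat _ _ (F2 := fun => Posz 2)); last by move=> l hl; rewrite ifT //; lia.
  rewrite [X in (_ + (X + _))%R](eq_big_nat _ _ (F2 := fun => (-2 : int)%R)); last first.
    by move=> l hl; rewrite ifF; [rewrite ifT //|]; lia.
  rewrite [X in (_ + (_ + X))%R](eq_big_nat _ _ (F2 := fun => (-1 : int)%R)); last first.
    by move=> l hl; rewrite ifF; [rewrite ifF //|]; lia.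
  by rewrite !sumr_const_nat; lia.
- rewrite (negbTE r_odd) in r_eq; rewrite (_ : (3 * r) %/ 2 = 3 * q); last by lia.
  rewrite (big_cat_nat (n := 3 * q + 1)) /=; try lia.
  rewrite (eq_big_nat _ _ (F2 := fun => Posz 2)); last by move=> l hl; rewrite ifT //; lia.
  rewrite [X in (_ + X)%R](eq_big_nat _ _ (F2 := fun => (-2 : int)%R)); last first.
    by move=> l hl; rewrite ifF //; lia.
  by rewrite !sumr_const_nat; lia.
Qed.

Definition in_block (m j a : nat) : bool :=
  (pr m a %| j) && (0 < j %/ pr m a <= 2 * rho m).

(* Blocks of distinct primes are disjoint, since 2 rho < p_a. *)
Lemma in_block_unique (m j a b : nat) : a < rho m -> b < rho m ->
  in_block m j a -> in_block m j b -> a = b.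
Proof.
move=> ha hb /andP[pa_j _] /andP[pb_j /andP[l_pos l_le]].
case: (eqVneq a b) => // neq_ab.
have : pr m a %| j %/ pr m b.
  by rewrite -(Gauss_dvdl _ (coprime_pr ha hb neq_ab)) divnK.
by move/(dvdn_leq l_pos); have := two_rho_lt_pr ha; lia.
Qed.

Lemma head_as_sum (R : nmodType) (s : seq nat) (F : nat -> R) :
  uniq s -> {in s &, forall a b, a = b} ->
  (match s with a :: _ => F a | [::] => 0 end = \sum_(a <- s) F a)%R.
Proof.
case: s => [|a [|b s]] uniq_s s_const; rewrite ?big_nil ?big_seq1 //.
by move: uniq_s; rewrite (s_const a b) ?inE ?eqxx ?orbT //= inE eqxx.
Qed.

Lemma block_weight (m j a : nat) : a < rho m ->
  (\sum_(1 <= l < (2 * rho m).+1) (if j == l * pr m a then wt (rho m) l else 0) =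
   if in_block m j a then wt (rho m) (j %/ pr m a) else 0)%R.
Proof.
move=> ha; have p_pos : 0 < pr m a by have [/prime_gt0] := pr_spec ha.
case: ifP => [/andP[pa_j l_range] | not_in_block].
  rewrite (eq_big_nat _ _ (F2 := fun l => if l == j %/ pr m a then wt (rho m) l else 0)).
    by rewrite -big_mkcond big_nat1_eq ltnS l_range.
  by move=> l _; rewrite -{1}(divnK pa_j) eqn_pmul2r // eq_sym.
rewrite big1_seq // => l; rewrite mem_index_iota => hl.
by case: eqP => // j_eq; move: not_in_block; rewrite /in_block j_eq dvdn_mull // mulnK //; lia.
Qed.

Lemma abar_blocks (m j : nat) :
  abar m j = (\sum_(0 <= a < rho m) \sum_(1 <= l < (2 * rho m).+1)
     (if j == l * pr m a then wt (rho m) l else 0))%R.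
Proof.
rewrite (eq_big_nat _ _ (fun a ha => block_weight j (proj2 (andP ha)))).
rewrite -big_mkcond /= -big_filter /abar /index_iota subn0 -/(in_block m j).
apply: head_as_sum; first by rewrite filter_uniq ?iota_uniq.
move=> a b; rewrite !mem_filter !mem_iota /= => /andP[ja ha] /andP[jb hb].
by apply: (in_block_unique (j := j)) => //; lia.
Qed.

Lemma weighted_sum_blocks (m : nat) (c : nat -> int) :
  (\sum_(1 <= j < (kk m).+1) abar m j * c j =
   \sum_(0 <= a < rho m) \sum_(1 <= l < (2 * rho m).+1) wt (rho m) l * c (l * pr m a)%N)%R.
Proof.
transitivity (\sum_(1 <= j < (kk m).+1) \sum_(0 <= a < rho m)
    \sum_(1 <= l < (2 * rho m).+1) (if j == l * pr m a then wt (rho m) l * c j else 0))%R.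
  apply: eq_bigr => j _; rewrite abar_blocks mulr_suml; apply: eq_bigr => a _.
  by rewrite mulr_suml; apply: eq_bigr => l _; case: eqP; rewrite ?mul0r.
rewrite exchange_big; apply: eq_big_nat => a /andP[_ ha].
rewrite exchange_big; apply: eq_big_nat => l /andP[l_pos l_le].
have [/prime_gt0 p_pos _ _] := pr_spec ha.
by rewrite -big_mkcond big_nat1_eq ltnS block_index_le_kk // muln_gt0 l_pos p_pos.
Qed.

Definition pattern (m i s : nat) : bool := s %% pr m i == beta m i.

Section Threshold.
Variables (m i t : nat).
Hypotheses (rho_ge2 : 2 <= rho m) (hi : i < rho m) (kk_le_t : kk m <= t).

Definition block_sum (a : nat) : int :=
  (\sum_(1 <= l < (2 * rho m).+1) wt (rho m) l * Posz (pattern m i (t - l * pr m a)))%R.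

Lemma block_index_le_t (a l : nat) : a < rho m -> l <= 2 * rho m -> l * pr m a <= t.
Proof. by move=> ha hl; apply: leq_trans kk_le_t; apply: block_index_le_kk. Qed.

Lemma pattern_back_self (l : nat) : l <= 2 * rho m ->
  pattern m i (t - l * pr m i) = pattern m i t.
Proof.
move=> hl; have := eq_mod_subn (pr m i) (block_index_le_t hi hl).
by rewrite dvdn_mull // /pattern => /eqP ->.
Qed.

Lemma pattern_back_other (a l : nat) : a < rho m -> a != i -> 0 < l <= 2 * rho m ->
  pattern m i t -> pattern m i (t - l * pr m a) = false.
Proof.
move=> ha neq_ai /andP[l_pos l_le] /eqP on_t; apply/negbTE.
rewrite /pattern -on_t eq_mod_subn ?block_index_le_t //.
rewrite Gauss_dvdl ?coprime_pr // 1?eq_sym //.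
by apply/negP => /(dvdn_leq l_pos); have := two_rho_lt_pr hi; lia.
Qed.

Lemma block_sum_self : block_sum i = if pattern m i t then Posz (2 * rho m) else 0%R.
Proof.
rewrite /block_sum (eq_big_nat _ _ (F2 := fun l => wt (rho m) l * Posz (pattern m i t))%R).
  by rewrite -mulr_suml sum_wt //; case: (pattern m i t); rewrite ?mulr1 ?mulr0.
by move=> l /andP[_ hl]; rewrite pattern_back_self.
Qed.

Lemma block_sum_other_zero (a : nat) : a < rho m -> a != i -> pattern m i t ->
  block_sum a = 0%R.
Proof.
move=> ha neq_ai on_t; apply: big1_seq => l; rewrite mem_index_iota => hl.
by rewrite pattern_back_other // mulr0.
Qed.

(* In a foreign block at most one multiplier hits the class of beta_i:
   the numbers t - l p_a, l < p_i, are pairwise incongruent mod p_i. *)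
Lemma block_sum_other_le2 (a : nat) : a < rho m -> a != i -> (block_sum a <= 2)%R.
Proof.
move=> ha neq_ai; apply: weighted_indicator_sum_le => // [l|]; first exact: wt_le2.
apply: sum_indicator_le1 => l1 l2 /andP[_ hl1] /andP[_ hl2] /eqP on1 /eqP on2.
have p_big := two_rho_lt_pr hi; have neq_ia : i != a by rewrite eq_sym.
apply: (sub_multiples_mod_inj (t := t) (coprime_pr hi ha neq_ia));
  rewrite ?block_index_le_t ?on1 ?on2 //; lia.
Qed.

(* The threshold 2 rho is reached exactly when t is in the pattern: block i
   alone contributes 2 rho then, and otherwise the rho - 1 foreign blocks
   contribute at most 2 each. *)
Lemma threshold_on_pattern :
  (theta m <= \sum_(1 <= j < (kk m).+1) abar m j * Posz (pattern m i (t - j)))%R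
  = pattern m i t.
Proof.
rewrite (weighted_sum_blocks m (fun J => Posz (pattern m i (t - J)))).
rewrite (eq_big_nat _ _ (F2 := block_sum)) // /theta.
case on_t: (pattern m i t).
  rewrite (eq_big_nat _ _ (F2 := fun a => if a == i then Posz (2 * rho m) else 0%R)).
    by rewrite -big_mkcond big_nat1_eq hi /= lexx.
  move=> a /andP[_ ha]; case: eqP => [->|/eqP neq_ai].
    by rewrite block_sum_self on_t.
  exact: block_sum_other_zero.
have bound a : 0 <= a < rho m -> (block_sum a <= 2 - (if a == i then 2 else 0))%R.
  move=> /andP[_ ha]; case: eqP => [->|/eqP neq_ai].
    by rewrite block_sum_self on_t subrr.
  by rewrite subr0 block_sum_other_le2.
apply/negbTE; rewrite -ltNge; apply: (le_lt_trans (ler_sum_nat bound)).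
rewrite sumrB sumr_const_nat -big_mkcond big_nat1_eq hi /=; lia.
Qed.

End Threshold.

Lemma size_x_hist (m i n : nat) : size (x_hist m i n) = n.
Proof. by elim: n => //= n IH; rewrite size_rcons IH. Qed.

Lemma nth_x_hist (m i n s : nat) : s < n ->
  nth false (x_hist m i n) s = nth false (x_hist m i s.+1) s.
Proof.
elim: n => // n IH; rewrite ltnS leq_eqVlt => /orP[/eqP -> // | s_lt].
by rewrite /= nth_rcons size_x_hist s_lt IH.
Qed.

Lemma kk_divn_eq (m i : nat) : kk m = mu m i * pr m i + beta m i.
Proof. exact: divn_eq. Qed.

Lemma beta_lt_pr (m i : nat) : i < rho m -> beta m i < pr m i.
Proof. by move=> hi; have [/prime_gt0 p_pos _ _] := pr_spec hi; rewrite ltn_pmod. Qed.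

(* The initial segment x(0), ..., x(k-1) is the pattern, because
   k = mu_i p_i + beta_i. *)
Lemma x_init_pattern (m i t : nat) : i < rho m -> t < kk m -> x_init m i t = pattern m i t.
Proof.
move=> hi t_lt; have [/prime_gt0 p_pos _ _] := pr_spec hi.
have beta_lt := beta_lt_pr hi.
apply/hasP/eqP => [[l _ /eqP ->] | t_mod].
  by rewrite addnC modnMDl modn_small.
exists (t %/ pr m i); last by rewrite {1}(divn_eq t (pr m i)) t_mod addnC.
rewrite mem_iota add0n -(ltn_pmul2r p_pos) -(ltn_add2r (beta m i)) -kk_divn_eq -t_mod.
by rewrite -divn_eq.
Qed.

Lemma x_periodic (m i t : nat) : 2 <= rho m -> i < rho m ->
  x m i t = pattern m i t.
Proof.
move=> rho_ge2 hi; elim/ltn_ind: t => t IH.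
rewrite /x /= nth_rcons size_x_hist ltnn eqxx /x_next.
case: ltnP => t_kk; first by rewrite x_init_pattern.
rewrite -threshold_on_pattern //; congr (_ <= _)%R.
apply: eq_big_nat => j /andP[j_pos j_le].
have back : t - j < t by lia.
by rewrite nth_x_hist //; move: (IH _ back); rewrite /x => ->.
Qed.

Theorem lemma8 (m : nat) (hm : 0 < m) (hrho : 2 <= rho m) (t i : nat) :
  kk m <= t -> i < rho m ->
  mu m i <= \sum_(1 <= j < (kk m).+1) x m i (t - j) <= (mu m i).+1.
Proof.
move=> kk_le_t hi; have [/prime_gt0 p_pos _ _] := pr_spec hi.
under eq_big_nat => j _ do rewrite x_periodic //.
rewrite (sum_window_rev (fun s => pattern m i s : nat) kk_le_t).
move: (t - kk m) (subnK kk_le_t) => a <-; rewrite (kk_divn_eq m i).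
by apply: count_residue_window => //; apply: beta_lt_pr.
Qed.
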